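(* Let $R$ be an associative ring with identity and involution $*$, and let $a\in R^{\#}\cap R^{\dagger}$. Let $\tau_a=\{a,\ a^{\#},\ (a^{\dagger})^*\}$ and $\gamma_a=\{a^{\dagger},\ a^*,\ (a^{\#})^*\}$. Then the following are equivalent: (1) $a\in R^{SEP}$; (2) $xx^{\dagger}a^2a^*a^{\dagger}\in PE(R)$ for some $x\in\gamma_a$; (3) $x^{\dagger}xa^2a^*a^{\dagger}\in PE(R)$ for some $x\in\tau_a$.
   Context: An involution on $R$ is a map $x\mapsto x^*$ with $(x^* )^*=x$, $(x+y)^*=x^*+y^*$, $(xy)^*=y^*x^*$. An element $a$ is Moore–Penrose invertible if there is $b$ with $aba=a$, $bab=b$, $(ab)^*=ab$, $(ba)^*=ba$; such $b$ is unique, denoted $a^{\dagger}$, and $R^{\dagger}$ is the set of such $a$ (all elements of $\tau_a\cup\gamma_a$ are Moore–Penrose invertible when $a\in R^{\#}\cap R^{\dagger}$). An element $a$ is group invertible if there is $b$ with $aba=a$, $bab=b$, $ab=ba$; such $b$ is unique, denoted $a^{\#}$, and $R^{\#}$ is the set of such $a$. $PE(R)=\{e\in R: e^2=e=e^*\}$ is the set of projections. For $a\in R^{\#}\cap R^{\dagger}$, $a$ is SEP if $a^*=a^{\dagger}=a^{\#}$; $R^{SEP}$ denotes the set of SEP elements. *)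

From mathcomp Require Import all_boot all_algebra.
Set Implicit Arguments. Unset Strict Implicit. Unset Printing Implicit Defensive.
Import GRing.Theory.
Local Open Scope ring_scope.

Definition involution (R : pzRingType) (star : R -> R) : Prop :=
  [/\ forall x, star (star x) = x,
      forall x y, star (x + y) = star x + star y &
      forall x y, star (x * y) = star y * star x].

Definition is_mp (R : pzRingType) (star : R -> R) (a b : R) : Prop :=
  [/\ a * b * a = a, b * a * b = b,
      star (a * b) = a * b & star (b * a) = b * a].

Definition is_group_inv (R : pzRingType) (a b : R) : Prop :=
  [/\ a * b * a = a, b * a * b = b & a * b = b * a].

Definition is_proj (R : pzRingType) (star : R -> R) (e : R) : Prop :=
  e * e = e /\ star e = e.

(* a is SEP: a^* = a^dagger = a^#, where ad = a^dagger and ag = a^#. *)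
Definition is_SEP (R : pzRingType) (star : R -> R) (a ad ag : R) : Prop :=
  star a = ad /\ ad = ag.

(* For every x in γ_a the projection x x^† equals a^† a, and for every x in
   τ_a so does x^† x: such an x satisfies a^† a x = x (resp. x a^† a = x) and
   a^† a lies in x R (resp. R x), and a hermitian idempotent is determined by
   these two properties.  So (2) and (3) both say that p = a^† a^3 a^* a^† is a
   projection.  If p is hermitian then (a^†)^2 a = a^†, whence a^† a^2 = a and
   a^† = a^#; if moreover p is idempotent then a^* a a^* = a^*, so a^* is a
   Moore-Penrose inverse of a and a^* = a^†.  Conversely, if a^* = a^† = a^#
   then p = a a^†. *)

From mathcomp Require Import all_boot all_algebra.
Set Implicit Arguments.
Unset Strict Implicit.
Unset Printing Implicit Defensive.
Import GRing.Theory.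
Local Open Scope ring_scope.

Section LeftContext.

Variable R : pzRingType.

Lemma lmul_congr2 (w x y u : R) : x * y = u -> w * x * y = w * u.
Proof. by move=> <-; rewrite mulrA. Qed.

Lemma lmul_congr3 (w x y z u : R) : x * y * z = u -> w * x * y * z = w * u.
Proof. by move=> <-; rewrite !mulrA. Qed.

End LeftContext.

Section GroupInverse.

Variables (R : pzRingType) (a g : R).
Hypothesis Hag : is_group_inv a g.

Lemma group_inv_lK : g * a * a = a.
Proof. by case: Hag => aga _ ag; rewrite -ag aga. Qed.

Lemma group_inv_rK : a * a * g = a.
Proof. by case: Hag => aga _ ag; rewrite -mulrA ag mulrA aga. Qed.

Lemma group_inv_lV : g * g * a = g.
Proof. by case: Hag => _ gag ag; rewrite -mulrA -ag mulrA gag. Qed.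

Lemma group_inv_rV : a * g * g = g.
Proof. by case: Hag => _ gag ag; rewrite ag gag. Qed.

End GroupInverse.

Section Involution.

Variables (R : pzRingType) (star : R -> R).
Hypothesis Hstar : involution star.

Lemma starK : involutive star. Proof. by case: Hstar. Qed.

Lemma starM x y : star (x * y) = star y * star x. Proof. by case: Hstar. Qed.

Lemma is_mp_uniq a b c : is_mp star a b -> is_mp star a c -> b = c.
Proof.
case=> aba bab abH baH [aca cac acH caH].
have star_a (x : R) : is_mp star a x -> star a = star a * star x * star a.
  by case=> axa _ _ _; rewrite -{1}axa !starM mulrA.
have b_bac : b = b * a * c.
  have bE : b = b * (star b * star a) by rewrite -starM abH mulrA bab.
  rewrite {1}bE (star_a c) // -!mulrA (mulrA (star b)) -(starM a b) -(starM a c) abH acH.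
  by rewrite !mulrA bab.
have c_bac : c = b * a * c.
  have cE : c = star a * star c * c by rewrite -starM caH cac.
  rewrite {1}cE (star_a b) // -(starM b a) -(mulrA _ (star a)) -(starM c a) baH caH.
  by rewrite -!mulrA (mulrA c) cac.
by rewrite b_bac -c_bac.
Qed.

Lemma mp_mulrV_eq f x xd v :
  star f = f -> is_mp star x xd -> f * x = x -> x * v = f -> x * xd = f.
Proof.
move=> fH [xxx _ xH _] fx xv.
have e_f : x * xd * f = f by rewrite -xv mulrA xxx.
have f_e : f * (x * xd) = x * xd by rewrite mulrA fx.
by rewrite -xH -f_e starM xH fH e_f.
Qed.

Lemma mp_mulVr_eq f x xd v :
  star f = f -> is_mp star x xd -> x * f = x -> v * x = f -> xd * x = f.
Proof.
move=> fH [xxx _ _ xH] xf vx.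
have f_e : f * (xd * x) = f by rewrite -vx -mulrA (mulrA x) xxx.
have e_f : xd * x * f = xd * x by rewrite -mulrA xf.
by rewrite -xH -e_f starM xH fH f_e.
Qed.

Section MoorePenrose.

Variables a d : R.
Hypothesis Had : is_mp star a d.

Lemma is_mp_sym : is_mp star d a.
Proof. by case: Had => ? ? ? ?; split. Qed.

Lemma mp_starMV : star a * star d = d * a.
Proof. by case: Had => _ _ _ daH; rewrite -starM daH. Qed.

Lemma mp_starMVr : star d * star a = a * d.
Proof. by case: Had => _ _ adH _; rewrite -starM adH. Qed.

Lemma mp_mulKstar : d * a * star a = star a.
Proof. by case: Had => ada _ _ _; rewrite -mp_starMV -mulrA -!starM ada. Qed.

Lemma mp_starKV : star d * (d * a) = star d.
Proof. by case: Had => _ dad _ _; rewrite -mp_starMV mulrA -!starM mulrA dad. Qed.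

Lemma mp_star_eq : star a * a * star a = star a -> star a = d.
Proof.
move=> sas; apply: (is_mp_uniq _ Had); split=> //.
- by move/(congr1 star): sas; rewrite !starM starK mulrA.
- by rewrite starM starK.
- by rewrite starM starK.
Qed.

Lemma mp_starK : star a * a * d = star a.
Proof. by case: Had => ada _ _ _; rewrite -mulrA -mp_starMVr -!starM ada. Qed.

Variable g : R.
Hypothesis Hag : is_group_inv a g.

Lemma group_inv_mulr_mp : g * (d * a) = g.
Proof.
case: Had => ada _ _ _.
by rewrite -{1}(group_inv_lV Hag) -!mulrA (mulrA a) ada mulrA group_inv_lV.
Qed.

Local Notation p := (d * a * a ^+ 2 * star a * d).

Lemma SEP_test_eq : is_SEP star a d g -> p = a * d.
Proof.
case=> sa dg; rewrite expr2 !mulrA sa {1}dg (group_inv_lK Hag).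
by rewrite {1}dg (group_inv_rK Hag).
Qed.

Lemma EP_of_test_hermitian : star p = p -> g = d.
Proof.
case: Had => ada _ _ _ pH.
have p_range : p * (d * a) = p.
  by rewrite -pH expr2 !starM starK mp_starMV -!mulrA (mulrA a d a) ada.
have strip_p : d * g * g * a * p = star a * d.
  rewrite expr2 !mulrA (lmul_congr3 _ ada) (lmul_congr3 _ (group_inv_lV Hag)).
  by rewrite (lmul_congr3 _ (group_inv_lK Hag)) mp_mulKstar.
have sa_d_range : star a * d * (d * a) = star a * d by rewrite -strip_p -mulrA p_range.
have da_sd : d * a * star d = star d.
  have sdag : star d * a * g = star d.
    by rewrite -{1}mp_starKV -!mulrA (mulrA a a g) (group_inv_rK Hag) mp_starKV.
  move/(congr1 star): sa_d_range; rewrite !starM starK mp_starMV => h.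
  by rewrite -{1}sdag mulrA h sdag.
have dda : d * (d * a) = d.
  by move/(congr1 star): da_sd; rewrite !starM !starK mp_starMV.
have daa : d * a * a = a.
  have aE : a = star d * star a * a by rewrite mp_starMVr ada.
  by rewrite [RHS]aE -[in RHS]da_sd -!mulrA (mulrA (star d)) mp_starMVr ada.
have ag_da : a * g = d * a.
  by rewrite -{1}daa -!mulrA (mulrA a) (group_inv_rK Hag).
by rewrite -(group_inv_rV Hag) ag_da -mulrA ag_da dda.
Qed.

Lemma partial_isometry_of_test_idem :
  is_group_inv a d -> p * p = p -> star a * a * star a = star a.
Proof.
move=> Hd pp; have [_ _ ad] := Hd.
have pE : p = a * a * star a * d by rewrite expr2 !mulrA (group_inv_lK Hd).
have h1 : a * a * star a * a * star a * d = a * a * star a * d.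
  by move: pp; rewrite pE !mulrA (lmul_congr3 _ (group_inv_lK Hd)).
have h2 : star a * a * star a * d = star a * d.
  move/(congr1 (fun z => d * d * z)): h1.
  by rewrite /= !mulrA (group_inv_lV Hd) mp_mulKstar.
move/(congr1 (fun z => z * a)): h2 => /=.
by rewrite !(lmul_congr2 _ (esym ad)) !mulrA (lmul_congr3 _ mp_starK) mp_starK.
Qed.

Lemma mp_mulrV_gamma x xd :
  x \in [:: d; star a; star g] -> is_mp star x xd -> x * xd = d * a.
Proof.
case: (Had) => _ dad _ daH.
rewrite !inE => /or3P[] /eqP-> x_mp.
- exact: mp_mulrV_eq daH x_mp dad (erefl (d * a)).
- exact: mp_mulrV_eq daH x_mp mp_mulKstar mp_starMV.
have dag : d * a * star g = star g.
  by rewrite -daH -starM group_inv_mulr_mp.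
have sgaa : star g * star a * star a = star a.
  by rewrite -!starM mulrA (group_inv_rK Hag).
have sg_range : star g * (star a * star a * star d) = d * a.
  by rewrite !mulrA sgaa mp_starMV.
exact: mp_mulrV_eq daH x_mp dag sg_range.
Qed.

Lemma mp_mulVr_tau x xd :
  x \in [:: a; g; star d] -> is_mp star x xd -> xd * x = d * a.
Proof.
case: (Had) => ada _ _ daH.
rewrite !inE => /or3P[] /eqP-> x_mp.
- by apply: mp_mulVr_eq daH x_mp _ (erefl (d * a)); rewrite mulrA ada.
- have daag : d * a * a * g = d * a by rewrite -!mulrA (mulrA a) (group_inv_rK Hag).
  exact: mp_mulVr_eq daH x_mp group_inv_mulr_mp daag.
- exact: mp_mulVr_eq daH x_mp mp_starKV mp_starMV.
Qed.

Lemma SEP_iff_test_proj : is_SEP star a d g <-> is_proj star p.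
Proof.
split=> [/SEP_test_eq -> | [pp pH]].
  by case: Had => ada _ adH _; split; first by rewrite mulrA ada.
have gd := EP_of_test_hermitian pH.
have Hd : is_group_inv a d by rewrite -gd.
by split; first exact/mp_star_eq/partial_isometry_of_test_idem.
Qed.

End MoorePenrose.
End Involution.

Theorem corollary2p6 (R : pzRingType) (star : R -> R)
    (Hstar : involution star) (a ad ag : R)
    (Had : is_mp star a ad) (Hag : is_group_inv a ag) :
  (is_SEP star a ad ag <->
     exists2 x, x \in [:: ad; star a; star ag] &
       exists2 xd, is_mp star x xd &
         is_proj star (x * xd * a ^+ 2 * star a * ad)) /\
  (is_SEP star a ad ag <->
     exists2 x, x \in [:: a; ag; star ad] &
       exists2 xd, is_mp star x xd &
         is_proj star (xd * x * a ^+ 2 * star a * ad)).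
Proof.
have sep_iff := SEP_iff_test_proj Hstar Had Hag.
split; split=> [/sep_iff hp | [x x_in [xd x_mp]]].
- by exists ad; [exact: mem_head | exists a; first exact: is_mp_sym].
- by rewrite (mp_mulrV_gamma Hstar Had Hag x_in x_mp) => /sep_iff.
- by exists a; [exact: mem_head | exists ad].
- by rewrite (mp_mulVr_tau Hstar Had Hag x_in x_mp) => /sep_iff.
Qed.
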